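(* Let $\mathcal{X}\subseteq\mathbb{R}^{n_x}$, $\mathcal{U}\subseteq\mathbb{R}^{n_u}$ non-empty, compact and convex, and $\mathcal{E}\subseteq\mathbb{R}^{n_x}$. Let $f(x,u)=f_x(x)+f_u(x)u$ and $\hat f(x,u)=\hat f_x(x)+\hat f_u(x)u$ with $f_x,\hat f_x:\mathcal{X}\to\mathbb{R}^{n_x}$, $f_u,\hat f_u:\mathcal{X}\to\mathbb{R}^{n_x\times n_u}$, and assume $f(x,u)-\hat f(x,u)\in\mathcal{E}$ for all $(x,u)\in\mathcal{X}\times\mathcal{U}$. Let $\pi:\mathcal{X}\times\mathcal{E}\to\mathcal{U}$ be of the form $\pi(x,e)=\pi_x(x)+\pi_e(x)e$ with $\pi_x:\mathcal{X}\to\mathbb{R}^{n_u}$, $\pi_e:\mathcal{X}\to\mathbb{R}^{n_u\times n_x}$. Then for every $x\in\mathcal{X}$, the set of $u\in\mathcal{U}$ satisfying $$u=\pi_x(x)+\pi_e(x)\Big(f_x(x)-\hat f_x(x)+\big(f_u(x)-\hat f_u(x)\big)u\Big)$$ is non-empty, coincides with the set of solutions of $u=\pi(x,f(x,u)-\hat f(x,u))$, $u\in\mathcal{U}$, and is convex (so a solution is obtained by a convex feasibility program). If moreover $\mathcal{U}$ is a polytope, this feasibility problem is a linear program.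
   Context: The equation $u=\pi(x,f(x,u)-\hat f(x,u))$, $u\in\mathcal{U}$, is the concretization problem for the informed policy $\pi$ at state $x$. *)

From HB Require Import structures.
From mathcomp Require Import all_boot all_order all_algebra.
From mathcomp Require Import all_classical all_reals all_analysis.
Set Implicit Arguments. Unset Strict Implicit. Unset Printing Implicit Defensive.
Import Order.TTheory GRing.Theory Num.Theory.
Import numFieldNormedType.Exports.
Local Open Scope classical_set_scope.
Local Open Scope ring_scope.

Definition halfspaces (R : realType) (n m : nat)
  (A : 'M[R]_(m, n)) (b : 'cV[R]_m) : set 'cV[R]_n :=
  [set u | forall i : 'I_m, (A *m u) i 0 <= b i 0].

Definition polytope (R : realType) (n : nat) (S : set 'cV[R]_n) : Prop :=
  (exists (m : nat) (A : 'M[R]_(m, n)) (b : 'cV[R]_m), S = halfspaces A b)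
  /\ bounded_set S.

From HB Require Import structures.
From mathcomp Require Import all_boot all_order all_algebra.
From mathcomp Require Import all_classical all_reals all_analysis.
From mathcomp Require Import ring lra.
Import Order.TTheory GRing.Theory Num.Theory.
Import numFieldNormedType.Exports.
Local Open Scope classical_set_scope.
Local Open Scope ring_scope.

(* Writing M := pi_e(x) (f_u(x) - hat f_u(x)) and c := pi_x(x) + pi_e(x) (f_x(x) - hat f_x(x)),
   the solutions are the fixed points in U of the affine map g u := M u + c, and g maps U
   into U because pi takes values in U.  Convexity and, for a polytope U, the description by
   linear constraints follow from affinity of g.  For existence, the Cesaro means of an orbit
   of g stay in the convex set U and are moved by g by (u_(k+1) - u_0) / (k+1), whose norm
   is at most 2 max_U |.| / (k+1); hence the minimum of |g u - u| over the compact U is 0. *)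

Section affine_maps.
Context {R : realType}.

Lemma ge0_le_invn_eq0 (x C : R) :
  0 <= x -> (forall k, x <= k.+1%:R^-1 * C) -> x = 0.
Proof.
move=> x_ge0 x_le; apply/eqP; rewrite eq_le x_ge0 andbT leNgt; apply/negP => x_gt0.
have := x_le (Num.truncn (C / x)); apply/negP; rewrite -ltNge.
by rewrite ltr_pdivrMl ?ltr0n // -ltr_pdivrMr // truncnS_gt.
Qed.

Lemma mulmx_sum_col m n (M : 'M[R]_(m, n)) (u : 'cV[R]_n) :
  M *m u = \sum_j u j 0 *: col j M.
Proof.
apply/matrixP => i k; rewrite (ord1 k) !mxE summxE.
by apply: eq_bigr => j _; rewrite !mxE mulrC.
Qed.

Lemma continuous_mulmx m n (M : 'M[R]_(m, n)) :
  continuous (fun u : 'cV[R]_n => M *m u).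
Proof.
rewrite (_ : (fun u => M *m u) = fun u => \sum_j u j 0 *: col j M); last first.
  by apply: funext => u; exact: mulmx_sum_col.
apply: continuous_big => [|j _ u]; first exact: add_continuous.
exact: continuousZr_tmp (@coord_continuous R n 1 j 0 u).
Qed.

Lemma convex_set_comb n (U : set 'cV[R]_n) a b (t : R) :
  convex_set U -> U a -> U b -> 0 <= t <= 1 -> U (t *: a + (1 - t) *: b).
Proof.
move=> cvxU Ua Ub /andP[t0 t1].
exact/set_mem/(cvxU a b (Itv01 t0 t1) (mem_set Ua) (mem_set Ub)).
Qed.

Definition affine_fixpoints {n} (U : set 'cV[R]_n) (M : 'M[R]_n) (c : 'cV[R]_n) :=
  [set u | U u /\ u = M *m u + c].

Lemma affine_fixpoints_halfspaces n m (A : 'M[R]_(m, n)) b M c :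
  affine_fixpoints (halfspaces A b) M c =
    [set u | halfspaces A b u /\ (1%:M - M) *m u = c].
Proof.
apply: eq_set => u; rewrite mulmxBl mul1mx; apply: propext.
split=> -[Au fixu]; split => //; first by rewrite {1}fixu addrAC subrr add0r.
by rewrite -fixu addrC subrK.
Qed.

Local Open Scope convex_scope.

Lemma affine_conv n (M : 'M[R]_n) (c : 'cV[R]_n) (a b : convex_lmodType 'cV[R]_n)
    (l : {i01 R}) :
  M *m (a <| l |> b : 'cV_n) + c = (M *m a + c : convex_lmodType _) <| l |> (M *m b + c).
Proof.
rewrite /conv /= mulmxDr -!scalemxAr !scalerDr addrACA.
by rewrite -scalerDl subrKC scale1r.
Qed.

Lemma convex_set_affine_fixpoints n (U : set 'cV[R]_n) M c :
  convex_set U -> convex_set (affine_fixpoints U M c).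
Proof.
move=> cvxU a b l /set_mem[Ua fixa] /set_mem[Ub fixb]; apply/mem_set; split.
  exact/set_mem/(cvxU a b l (mem_set Ua) (mem_set Ub)).
by rewrite affine_conv -fixa -fixb.
Qed.

End affine_maps.

Section affine_fixpoint.
Context {R : realType} {n : nat} {M : 'M[R]_n} {c : 'cV[R]_n} {U : set 'cV[R]_n}.
Hypotheses (cvxU : convex_set U) (mapsU : forall u, U u -> U (M *m u + c)).

Section cesaro_means.
Variables (u0 : 'cV[R]_n).
Hypothesis Uu0 : U u0.

Let orbit k := iter k (fun u => M *m u + c) u0.
Let cesaro k := k.+1%:R^-1 *: \sum_(0 <= i < k.+1) orbit i.

Lemma orbit_in k : U (orbit k).
Proof. by elim: k => //= k; exact: mapsU. Qed.

Lemma cesaro_in k : U (cesaro k).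
Proof.
elim: k => [|k IHk]; first by rewrite /cesaro big_nat1 invr1 scale1r.
have -> : cesaro k.+1 = (k.+1%:R / k.+2%:R) *: cesaro k
                        + (1 - k.+1%:R / k.+2%:R) *: orbit k.+1.
  have k_ge0 := ler0n R k.
  rewrite /cesaro scalerA big_nat_recr //= scalerDr.
  by congr (_ *: _ + _ *: _); field; rewrite ?pnatr_eq0 //; lra.
apply: convex_set_comb => //; first exact: orbit_in.
by rewrite divr_ge0 ?ler0n //= ler_pdivrMr ?ltr0n // mul1r ler_nat.
Qed.

Lemma cesaro_defect k :
  M *m cesaro k + c - cesaro k = k.+1%:R^-1 *: (orbit k.+1 - u0).
Proof.
set N := k.+1; set s := \sum_(0 <= i < N) orbit i.
have telescoped : M *m s + c *+ N - s = orbit N - u0.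
  rewrite -(telescope_sumr _ (leq0n N)) sumrB -[in c *+ N](subn0 N).
  by rewrite -sumr_const_nat mulmx_sumr -big_split.
rewrite -telescoped /cesaro -/s -scalemxAr !scalerDr scalerN; congr (_ + _ - _).
by rewrite -[c *+ N]scaler_nat scalerA mulVf ?pnatr_eq0 // scale1r.
Qed.

End cesaro_means.

Lemma affine_fixpoints_neq0 : U !=set0 -> compact U -> affine_fixpoints U M c !=set0.
Proof.
move=> [u0 Uu0] cptU.
have defect_cont : continuous (fun u => `|M *m u + c - u|).
  move=> u; apply: continuous_comp; last exact: norm_continuous.
  apply: continuousB; last exact: cvg_id.
  by apply: continuousD; [exact: continuous_mulmx | exact: cst_continuous].
have [us /set_mem Uus us_min] :=
  compact_EVT_min (ex_intro _ u0 Uu0) cptU (continuous_subspaceT defect_cont).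
have [v _ v_max] :=
  compact_EVT_max (ex_intro _ u0 Uu0) cptU (continuous_subspaceT (@norm_continuous _ _)).
have defect_le k : `|M *m us + c - us| <= k.+1%:R^-1 * (`|v| + `|v|).
  apply: le_trans (us_min _ (mem_set (cesaro_in u0 Uu0 k))) _.
  rewrite cesaro_defect normrZ ger0_norm ?invr_ge0 // ler_wpM2l ?invr_ge0 //.
  apply: le_trans (ler_normB _ _) _.
  by apply: lerD; apply: v_max; apply: mem_set; [exact: orbit_in | ].
exists us; split => //; apply/eqP; rewrite eq_sym -subr_eq0 -normr_eq0; apply/eqP.
exact: ge0_le_invn_eq0 defect_le.
Qed.

End affine_fixpoint.

Theorem theorem4 (R : realType) (nx nu : nat)
  (X : set 'cV[R]_nx) (U : set 'cV[R]_nu) (E : set 'cV[R]_nx)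
  (fx hfx : 'cV[R]_nx -> 'cV[R]_nx) (fu hfu : 'cV[R]_nx -> 'M[R]_(nx, nu))
  (pix : 'cV[R]_nx -> 'cV[R]_nu) (pie : 'cV[R]_nx -> 'M[R]_(nu, nx)) :
  X !=set0 -> compact X -> convex_set X ->
  U !=set0 -> compact U -> convex_set U ->
  (* f(x,u) - \hat f(x,u) \in E on X x U *)
  (forall x u, X x -> U u ->
     E ((fx x + fu x *m u) - (hfx x + hfu x *m u))) ->
  (* pi : X x E -> U *)
  (forall x e, X x -> E e -> U (pix x + pie x *m e)) ->
  forall x, X x ->
    let S := [set u | U u /\
               u = pix x + pie x *m (fx x - hfx x + (fu x - hfu x) *m u)] in
    [/\ S !=set0,
        S = [set u | U u /\
               u = pix x + pie x *m ((fx x + fu x *m u) - (hfx x + hfu x *m u))],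
        convex_set S
      & polytope U ->
        exists (p : nat) (A : 'M[R]_(p, nu)) (b : 'cV[R]_p)
               (C : 'M[R]_(nu, nu)) (d : 'cV[R]_nu),
          S = [set u | halfspaces A b u /\ C *m u = d]].
Proof.
move=> _ _ _ U0 cptU cvxU mismatchE piU x Xx S.
set M := pie x *m (fu x - hfu x); set c := pix x + pie x *m (fx x - hfx x).
have affineE u : pix x + pie x *m (fx x - hfx x + (fu x - hfu x) *m u) = M *m u + c.
  by rewrite mulmxDr mulmxA [pie x *m _ + _]addrC addrCA.
have mismatchE_affine u :
    (fx x + fu x *m u) - (hfx x + hfu x *m u) = fx x - hfx x + (fu x - hfu x) *m u.
  by rewrite mulmxBl opprD addrACA.
have mapsU u : U u -> U (M *m u + c).
  by move=> Uu; rewrite -affineE -mismatchE_affine; apply/piU/mismatchE.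
have -> : S = affine_fixpoints U M c by apply: eq_set => u; rewrite affineE.
split.
- exact: affine_fixpoints_neq0 cvxU mapsU U0 cptU.
- by apply: eq_set => u; rewrite mismatchE_affine affineE.
- exact: convex_set_affine_fixpoints.
- move=> [[p [A [b ->]]] _].
  by exists p, A, b, (1%:M - M), c; exact: affine_fixpoints_halfspaces.
Qed.
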